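(* Let $R$ be a $d$-variate tail copula, $d\ge2$, whose (right-hand) partial derivatives exist, and write $R(x,y)=R(x,y,\infty,\ldots,\infty)$ for its bivariate margin in the first two coordinates. For $g>0$ and $(x,y,\mathbf{z})\in[0,\infty)\times[0,\infty)\times[0,\infty)^{d-2}$, $$0\le\dot R_1(x,y+g,\mathbf{z})-\dot R_1(x,y,\mathbf{z})\le\dot R_1(x,y+g)-\dot R_1(x,y),$$ where $\dot R_1$ denotes the right-hand partial derivative with respect to the first argument (of the $d$-variate, respectively bivariate, function).
   Context: A $d$-variate tail copula is a function $R:[0,\infty)^d\to[0,\infty)$ with $R(\mathbf{x})=\lim_{s\downarrow0}s^{-1}\mathbb{P}\{V_1\le sx_1,\ldots,V_d\le sx_d\}$ for a random vector with uniform $(0,1)$ margins (the limit existing for all $\mathbf{x}$); it extends to arguments with some coordinates equal to $+\infty$ (not all) by dropping the corresponding events, i.e. $R(x,y,\infty,\ldots,\infty)=\lim_{s\downarrow0}s^{-1}\mathbb{P}\{V_1\le sx,V_2\le sy\}$. *)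

From Stdlib Require Import Reals Lra.
Open Scope R_scope.

(* Points of R^d are represented as functions nat -> R; only coordinates
   0..d-1 are meaningful. Extended points (coordinates possibly +infinity)
   are functions nat -> option R, with None standing for +infinity. *)

Definition upd (u : nat -> R) (i : nat) (a : R) : nat -> R :=
  fun j => if Nat.eq_dec j i then a else u j.

(* C-volume of the box [a,b] (first k coordinates), i.e. the alternating
   sum of C over the vertices; call with k = d. *)
Fixpoint vol (k : nat) (a b : nat -> R) (C : (nat -> R) -> R) (u : nat -> R) : R :=
  match k with
  | O => C u
  | S k' => vol k' a b C (upd u k' (b k')) - vol k' a b C (upd u k' (a k'))
  end.

Definition in_cube (d : nat) (u : nat -> R) : Prop :=
  forall i, (i < d)%nat -> 0 <= u i <= 1.

Definition is_copula (d : nat) (C : (nat -> R) -> R) : Prop :=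
  (forall u v, (forall i, (i < d)%nat -> u i = v i) -> C u = C v) /\
  (forall u, in_cube d u -> (exists i, (i < d)%nat /\ u i = 0) -> C u = 0) /\
  (forall u i, in_cube d u -> (i < d)%nat ->
     (forall j, (j < d)%nat -> j <> i -> u j = 1) -> C u = u i) /\
  (forall a b, in_cube d a -> in_cube d b ->
     (forall i, (i < d)%nat -> a i <= b i) -> 0 <= vol d a b C a).

(* Argument of C at scale s: s*x_i, or 1 (event dropped) if x_i = infinity. *)
Definition cval (s : R) (e : option R) : R :=
  match e with Some v => s * v | None => 1 end.

Definition nonneg_ext (d : nat) (x : nat -> option R) : Prop :=
  forall i, (i < d)%nat -> match x i with Some v => 0 <= v | None => True end.

Definition not_all_inf (d : nat) (x : nat -> option R) : Prop :=
  exists i, (i < d)%nat /\ x i <> None.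

Definition is_tail_copula (d : nat) (Rt : (nat -> option R) -> R) : Prop :=
  exists C, is_copula d C /\
    forall x, nonneg_ext d x -> not_all_inf d x ->
      forall eps, 0 < eps -> exists delta, 0 < delta /\
        forall s, 0 < s < delta ->
          Rabs (C (fun i => cval s (x i)) / s - Rt x) < eps.

Definition updx (x : nat -> option R) (i : nat) (a : R) : nat -> option R :=
  fun j => if Nat.eq_dec j i then Some a else x j.

Definition has_right_pderiv (F : (nat -> option R) -> R) (i : nat)
    (x : nat -> option R) (l : R) : Prop :=
  match x i with
  | Some v => forall eps, 0 < eps -> exists delta, 0 < delta /\
      forall h, 0 < h < delta ->
        Rabs ((F (updx x i (v + h)) - F x) / h - l) < eps
  | None => False
  end.

Definition pt (x y : R) (z : nat -> R) : nat -> option R :=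
  fun i => match i with O => Some x | S O => Some y | _ => Some (z i) end.

Definition pt2 (x y : R) : nat -> option R :=
  fun i => match i with O => Some x | S O => Some y | _ => None end.

(* The mass that the copula C puts on the rectangle [s x, s (x+h)] x [s y, s (y+g)]
   in the first two coordinates, with the remaining coordinates restricted to [0, s z],
   is nonnegative and grows when those restrictions are relaxed to [0, 1]; both facts
   are instances of d-increasingness, because coordinates whose lower box corner is 0
   drop out of the volume by groundedness. Dividing by s and letting s -> 0 gives
   0 <= D(R) <= D(R_2) for the rectangle differences of R and of its bivariate margin;
   dividing by h and letting h -> 0 gives the inequality between partial derivatives. *)

From Stdlib Require Import Reals Lra Lia FunctionalExtensionality.
Open Scope R_scope.

Ltac coord_cases :=
  cbv beta;
  repeat (match goal with
  | |- context [Nat.eq_dec ?a ?b] => destruct (Nat.eq_dec a b); try subst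
  | |- context [Nat.leb ?a ?b] => destruct (Nat.leb_spec a b)
  | |- context [Nat.ltb ?a ?b] => destruct (Nat.ltb_spec a b)
  end; cbv beta iota delta [andb]); try reflexivity; try lia.

Definition lim0p (f : R -> R) (L : R) : Prop :=
  forall eps, 0 < eps -> exists delta, 0 < delta /\
    forall t, 0 < t < delta -> Rabs (f t - L) < eps.

Lemma lim0p_const c : lim0p (fun _ => c) c.
Proof.
  intros eps Heps; exists 1; split; [lra|].
  intros t _; rewrite Rminus_diag, Rabs_R0; exact Heps.
Qed.

Lemma lim0p_ext f g L : (forall t, 0 < t -> f t = g t) -> lim0p f L -> lim0p g L.
Proof.
  intros Hfg Hf eps Heps; destruct (Hf eps Heps) as [delta [Hd H]].
  exists delta; split; [exact Hd|]; intros t Ht; rewrite <- Hfg by lra; auto.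
Qed.

Lemma lim0p_add f g L M : lim0p f L -> lim0p g M -> lim0p (fun t => f t + g t) (L + M).
Proof.
  intros Hf Hg eps Heps.
  destruct (Hf (eps / 2)) as [d1 [Hd1 H1]]; [lra|].
  destruct (Hg (eps / 2)) as [d2 [Hd2 H2]]; [lra|].
  exists (Rmin d1 d2); split; [apply Rmin_pos; assumption|].
  intros t Ht; pose proof (Rmin_l d1 d2); pose proof (Rmin_r d1 d2).
  pose proof (H1 t ltac:(lra)) as A; pose proof (H2 t ltac:(lra)) as B.
  apply Rabs_def2 in A; apply Rabs_def2 in B; apply Rabs_def1; lra.
Qed.

Lemma lim0p_opp f L : lim0p f L -> lim0p (fun t => - f t) (- L).
Proof.
  intros Hf eps Heps; destruct (Hf eps Heps) as [delta [Hd H]].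
  exists delta; split; [exact Hd|]; intros t Ht.
  replace (- f t - - L) with (- (f t - L)) by ring; rewrite Rabs_Ropp; auto.
Qed.

Lemma lim0p_sub f g L M : lim0p f L -> lim0p g M -> lim0p (fun t => f t - g t) (L - M).
Proof. intros Hf Hg; exact (lim0p_add _ _ _ _ Hf (lim0p_opp _ _ Hg)). Qed.

Lemma lim0p_le f g L M : lim0p f L -> lim0p g M ->
  (exists delta, 0 < delta /\ forall t, 0 < t < delta -> f t <= g t) -> L <= M.
Proof.
  intros Hf Hg [d0 [Hd0 Hle]].
  destruct (Rle_lt_dec L M) as [|HML]; [assumption|].
  destruct (lim0p_sub _ _ _ _ Hf Hg (L - M)) as [d1 [Hd1 H1]]; [lra|].
  set (t := Rmin d0 d1 / 2).
  assert (0 < Rmin d0 d1) by (apply Rmin_pos; assumption).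
  pose proof (Rmin_l d0 d1); pose proof (Rmin_r d0 d1).
  pose proof (Hle t ltac:(unfold t; lra)).
  pose proof (H1 t ltac:(unfold t; lra)) as A; apply Rabs_def2 in A; lra.
Qed.

Definition diff2 (F : R -> R -> R) (x0 x1 y0 y1 : R) : R :=
  F x1 y1 - F x0 y1 - F x1 y0 + F x0 y0.

Lemma lim0p_diff2 (F : R -> R -> R -> R) (G : R -> R -> R) x0 x1 y0 y1 :
  (forall p q, (p = x0 \/ p = x1) -> (q = y0 \/ q = y1) -> lim0p (fun t => F t p q) (G p q)) ->
  lim0p (fun t => diff2 (F t) x0 x1 y0 y1) (diff2 G x0 x1 y0 y1).
Proof.
  intros H; unfold diff2.
  apply lim0p_add; [apply lim0p_sub; [apply lim0p_sub|]|]; apply H; auto.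
Qed.

Lemma diff2_scale (F : R -> R -> R) s x0 x1 y0 y1 : 0 < s ->
  diff2 (fun p q => F (s * p) (s * q) / s) x0 x1 y0 y1
  = diff2 F (s * x0) (s * x1) (s * y0) (s * y1) / s.
Proof. intros Hs; unfold diff2; field; lra. Qed.

Lemma lim0p_diff2_quotient (F : R -> R -> R) x y0 y1 l0 l1 :
  lim0p (fun h => (F (x + h) y0 - F x y0) / h) l0 ->
  lim0p (fun h => (F (x + h) y1 - F x y1) / h) l1 ->
  lim0p (fun h => diff2 F x (x + h) y0 y1 / h) (l1 - l0).
Proof.
  intros H0 H1; refine (lim0p_ext _ _ _ _ (lim0p_sub _ _ _ _ H1 H0)).
  intros h Hh; unfold diff2; field; lra.
Qed.

Lemma div_le_compat_r a b s : 0 < s -> a <= b -> a / s <= b / s.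
Proof. intros Hs Hab; apply Rmult_le_compat_r; [left; apply Rinv_0_lt_compat|]; assumption. Qed.

Lemma small_scale (n : nat) (f : nat -> R) : exists delta, 0 < delta /\
  forall s, 0 < s < delta -> forall i, (i < n)%nat -> s * f i <= 1.
Proof.
  induction n as [|n [delta [Hd IH]]].
  - exists 1; split; [lra|]; intros; lia.
  - set (a := Rabs (f n)); assert (Ha : 0 <= a) by apply Rabs_pos.
    exists (Rmin delta (/ (1 + a))).
    split; [apply Rmin_pos; [exact Hd | apply Rinv_0_lt_compat; lra]|].
    intros s Hs i Hi; pose proof (Rmin_l delta (/ (1 + a))); pose proof (Rmin_r delta (/ (1 + a))).
    destruct (Nat.eq_dec i n) as [->|]; [|apply IH; lra || lia].
    assert (s * (1 + a) <= 1).
    { replace 1 with (/ (1 + a) * (1 + a)) at 2 by (field; lra).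
      apply Rmult_le_compat_r; lra. }
    assert (f n <= a) by apply Rle_abs; nra.
Qed.

Definition set01 (p q : R) (w : nat -> R) : nat -> R :=
  fun i => match i with O => p | S O => q | _ => w i end.

Lemma upd_upd_01 u p q : upd (upd u 1 q) 0 p = set01 p q u.
Proof. extensionality i; unfold upd; destruct i as [|[|i]]; coord_cases. Qed.

Definition slice (C : (nat -> R) -> R) (w : nat -> R) (p q : R) : R := C (set01 p q w).

Definition fill (b : nat -> R) (lo k : nat) (u : nat -> R) : nat -> R :=
  fun i => if andb (Nat.leb lo i) (Nat.ltb i k) then b i else u i.

Lemma vol_eq0 k a b C u :
  (forall v, (forall i, (k <= i)%nat -> v i = u i) ->
     (forall i, (i < k)%nat -> v i = a i \/ v i = b i) -> C v = 0) ->
  vol k a b C u = 0.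
Proof.
  revert u; induction k as [|k IH]; intros u H; cbn [vol].
  - apply H; intros; [reflexivity | lia].
  - assert (G : forall c, c = a k \/ c = b k -> vol k a b C (upd u k c) = 0).
    { intros c Hc; apply IH; intros v H1 H2; apply H.
      + intros i Hi; rewrite H1 by lia; unfold upd; coord_cases.
      + intros i Hi; destruct (Nat.eq_dec i k) as [->|]; [|apply H2; lia].
        rewrite H1 by lia; unfold upd; coord_cases; exact Hc. }
    rewrite (G (b k)), (G (a k)) by auto; ring.
Qed.

Lemma in_cube_upd d u k c : in_cube d u -> 0 <= c <= 1 -> in_cube d (upd u k c).
Proof. intros Hu Hc i Hi; unfold upd; coord_cases; auto. Qed.

Lemma in_cube_fill d b lo k u : in_cube d b -> in_cube d u -> in_cube d (fill b lo k u).
Proof. intros Hb Hu i Hi; unfold fill; coord_cases; auto. Qed.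

Lemma fill_empty b lo u : fill b lo lo u = u.
Proof. extensionality i; unfold fill; coord_cases. Qed.

Section CopulaSlices.

Variables (d : nat) (C : (nat -> R) -> R).
Hypothesis hC : is_copula d C.

Lemma vol_drop_zero_coord k a b u : (k < d)%nat -> a k = 0 ->
  in_cube d a -> in_cube d b -> in_cube d u ->
  vol (S k) a b C u = vol k a b C (upd u k (b k)).
Proof.
  intros Hk Hak Ha Hb Hu; cbn [vol].
  rewrite (vol_eq0 k a b C (upd u k (a k))); [ring|].
  intros v H1 H2; destruct hC as [_ [Hgr _]]; apply Hgr.
  - intros i Hi; destruct (Nat.lt_ge_cases i k) as [Hik|Hik].
    + destruct (H2 i Hik) as [-> | ->]; [apply Ha | apply Hb]; exact Hi.
    + rewrite H1 by exact Hik; refine (in_cube_upd _ _ _ _ Hu _ i Hi); apply Ha; exact Hk.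
  - exists k; split; [exact Hk|]; rewrite H1 by lia; unfold upd; coord_cases; exact Hak.
Qed.

Lemma vol_drop_zero_coords lo k a b u : (lo <= k <= d)%nat ->
  (forall i, (lo <= i < k)%nat -> a i = 0) ->
  in_cube d a -> in_cube d b -> in_cube d u ->
  vol k a b C u = vol lo a b C (fill b lo k u).
Proof.
  revert u; induction k as [|k IH]; intros u Hk Ha0 Ha Hb Hu.
  - replace lo with 0%nat by lia; rewrite fill_empty; reflexivity.
  - destruct (Nat.eq_dec lo (S k)) as [->|Hlo]; [rewrite fill_empty; reflexivity|].
    assert (Hbk : 0 <= b k <= 1) by (apply Hb; lia).
    rewrite vol_drop_zero_coord, IH by
      (lia || assumption || (apply in_cube_upd; assumption) || (apply Ha0; lia)
       || (intros; apply Ha0; lia)).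
    f_equal; extensionality i; unfold fill, upd; coord_cases.
Qed.

Lemma vol_two a b u : vol 2 a b C u = diff2 (slice C u) (a 0%nat) (b 0%nat) (a 1%nat) (b 1%nat).
Proof. cbn [vol]; rewrite !upd_upd_01; unfold diff2, slice; ring. Qed.

Lemma slice_ext w w' : (forall i, (2 <= i < d)%nat -> w i = w' i) -> slice C w = slice C w'.
Proof.
  intros Hw; extensionality p; extensionality q; unfold slice.
  destruct hC as [Hext _]; apply Hext; intros [|[|i]] Hi; [reflexivity | reflexivity |].
  apply Hw; lia.
Qed.

Variables (x0 x1 y0 y1 : R).
Hypotheses (hx : 0 <= x0 <= x1) (hx1 : x1 <= 1) (hy : 0 <= y0 <= y1) (hy1 : y1 <= 1).

Lemma slice_diff2_nonneg w : (2 <= d)%nat -> (forall i, (2 <= i < d)%nat -> 0 <= w i <= 1) ->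
  0 <= diff2 (slice C w) x0 x1 y0 y1.
Proof.
  intros hd hw; destruct hC as [_ [_ [_ Hinc]]].
  set (a := set01 x0 y0 (fun _ => 0)); set (b := set01 x1 y1 w).
  assert (Ha : in_cube d a) by (intros [|[|i]] Hi; cbn; lra).
  assert (Hb : in_cube d b) by (intros [|[|i]] Hi; cbn; [lra | lra | apply hw; lia]).
  assert (Hab : forall i, (i < d)%nat -> a i <= b i).
  { intros [|[|i]] Hi; cbn; [lra | lra | apply hw; lia]. }
  pose proof (Hinc a b Ha Hb Hab) as H.
  rewrite (vol_drop_zero_coords 2 d), vol_two in H
    by (lia || assumption || (intros [|[|i]]; cbn; lia || reflexivity)).
  rewrite (slice_ext (fill b 2 d a) w) in H
    by (intros [|[|i]] Hi; [lia | lia | unfold fill, b, set01; coord_cases]).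
  exact H.
Qed.

Lemma slice_diff2_mono w j c c' : (2 <= j < d)%nat ->
  (forall i, (2 <= i < d)%nat -> 0 <= w i <= 1) -> 0 <= c <= c' -> c' <= 1 ->
  diff2 (slice C (upd w j c)) x0 x1 y0 y1 <= diff2 (slice C (upd w j c')) x0 x1 y0 y1.
Proof.
  intros hj hw hc hc1; destruct hC as [_ [_ [_ Hinc]]].
  (* A box whose lower corner is 0 in every coordinate except 0, 1 and j. *)
  set (a := set01 x0 y0 (upd (fun _ => 0) j c)); set (b := set01 x1 y1 (upd w j c')).
  assert (Ha : in_cube d a) by (intros [|[|i]] Hi; cbn; [lra | lra | unfold upd; coord_cases; lra]).
  assert (Hb : in_cube d b).
  { intros [|[|i]] Hi; cbn; [lra | lra | unfold upd; coord_cases; [lra | apply hw; lia]]. }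
  assert (Hab : forall i, (i < d)%nat -> a i <= b i).
  { intros [|[|i]] Hi; cbn; [lra | lra |].
    unfold upd; coord_cases; [lra | pose proof (hw (S (S i)) ltac:(lia)); lra]. }
  pose proof (Hinc a b Ha Hb Hab) as H.
  assert (Ha0 : forall i, (2 <= i)%nat -> i <> j -> a i = 0).
  { intros [|[|i]] Hi Hij; [lia | lia |]; cbn; unfold upd; coord_cases. }
  rewrite (vol_drop_zero_coords (S j) d) in H by (lia || auto || (intros; apply Ha0; lia)).
  cbn [vol] in H.
  assert (Hcube : forall e, 0 <= e <= 1 -> in_cube d (upd (fill b (S j) d a) j e))
    by (intros; apply in_cube_upd; [apply in_cube_fill|]; assumption).
  rewrite !(vol_drop_zero_coords 2 j), !vol_two in H
    by (lia || assumption || (apply Hcube; (apply Ha || apply Hb); lia) || (intros; apply Ha0; lia)).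
  rewrite (slice_ext (fill b 2 j (upd (fill b (S j) d a) j (b j))) (upd w j c')),
    (slice_ext (fill b 2 j (upd (fill b (S j) d a) j (a j))) (upd w j c)) in H
    by (intros [|[|i]] Hi; [lia | lia | unfold fill, a, b, set01, upd; coord_cases]).
  unfold a, b in H; cbn [set01] in H; lra.
Qed.

Lemma slice_diff2_le_margin w : (2 <= d)%nat ->
  (forall i, (2 <= i < d)%nat -> 0 <= w i <= 1) ->
  diff2 (slice C w) x0 x1 y0 y1 <= diff2 (slice C (fun _ => 1)) x0 x1 y0 y1.
Proof.
  intros hd hw.
  set (trunc n := fun i => if Nat.ltb i n then w i else 1).
  assert (Htrunc : forall n, (2 <= n <= d)%nat ->
    diff2 (slice C (trunc n)) x0 x1 y0 y1 <= diff2 (slice C (trunc 2%nat)) x0 x1 y0 y1).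
  { induction n as [|n IH]; intros Hn; [lia|].
    destruct (Nat.eq_dec n 1) as [->|]; [lra|].
    eapply Rle_trans; [|apply IH; lia].
    replace (trunc (S n)) with (upd (trunc (S n)) n (w n))
      by (extensionality i; unfold trunc, upd; coord_cases).
    replace (trunc n) with (upd (trunc (S n)) n 1)
      by (extensionality i; unfold trunc, upd; coord_cases).
    apply slice_diff2_mono; [lia | | apply hw; lia | lra].
    intros i Hi; unfold trunc; coord_cases; [apply hw; lia | lra]. }
  rewrite (slice_ext w (trunc d)), (slice_ext (fun _ => 1) (trunc 2%nat))
    by (intros i Hi; unfold trunc; coord_cases).
  apply Htrunc; lia.
Qed.

End CopulaSlices.

Lemma tail_copula_diff2 d Rt (hd : (2 <= d)%nat) (hR : is_tail_copula d Rt)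
  (z : nat -> R) (hz : forall i, (2 <= i < d)%nat -> 0 <= z i)
  x0 x1 y0 y1 (hx : 0 <= x0 <= x1) (hy : 0 <= y0 <= y1) :
  0 <= diff2 (fun p q => Rt (pt p q z)) x0 x1 y0 y1
    <= diff2 (fun p q => Rt (pt2 p q)) x0 x1 y0 y1.
Proof.
  destruct hR as [C [hC hlim]].
  assert (Lpt : forall p q, (p = x0 \/ p = x1) -> (q = y0 \/ q = y1) ->
    lim0p (fun s => slice C (fun i => s * z i) (s * p) (s * q) / s) (Rt (pt p q z))).
  { intros p q Hp Hq; refine (lim0p_ext _ _ _ _ (hlim (pt p q z) _ _)).
    - intros s _; unfold slice; do 2 f_equal; extensionality i; destruct i as [|[|i]]; reflexivity.
    - intros [|[|i]] Hi; cbn; [lra | lra | apply hz; lia].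
    - exists 0%nat; split; [lia | discriminate]. }
  assert (Lpt2 : forall p q, (p = x0 \/ p = x1) -> (q = y0 \/ q = y1) ->
    lim0p (fun s => slice C (fun _ => 1) (s * p) (s * q) / s) (Rt (pt2 p q))).
  { intros p q Hp Hq; refine (lim0p_ext _ _ _ _ (hlim (pt2 p q) _ _)).
    - intros s _; unfold slice; do 2 f_equal; extensionality i; destruct i as [|[|i]]; reflexivity.
    - intros [|[|i]] Hi; cbn; [lra | lra | exact I].
    - exists 0%nat; split; [lia | discriminate]. }
  pose proof (lim0p_diff2 _ _ x0 x1 y0 y1 Lpt) as LD.
  pose proof (lim0p_diff2 _ _ x0 x1 y0 y1 Lpt2) as LD2.
  destruct (small_scale d (set01 x1 y1 z)) as [delta [Hdelta Hsmall]].
  assert (Hbox : forall s, 0 < s < delta ->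
    (0 <= s * x0 <= s * x1 /\ s * x1 <= 1) /\ (0 <= s * y0 <= s * y1 /\ s * y1 <= 1) /\
    (forall i, (2 <= i < d)%nat -> 0 <= s * z i <= 1)).
  { intros s Hs; pose proof (Hsmall s Hs 0%nat ltac:(lia)); pose proof (Hsmall s Hs 1%nat ltac:(lia)).
    cbn in *; split; [|split]; [nra | nra |].
    intros i Hi; pose proof (Hsmall s Hs i ltac:(lia)); pose proof (hz i Hi).
    destruct i as [|[|i]]; [lia | lia | cbn in *; nra]. }
  split.
  - apply (lim0p_le _ _ _ _ (lim0p_const 0) LD); exists delta; split; [exact Hdelta|].
    intros s Hs; destruct (Hbox s Hs) as [[Hx Hx1] [[Hy Hy1] Hw]].
    rewrite diff2_scale by lra; rewrite <- (Rdiv_0_l s); apply div_le_compat_r; [lra|].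
    apply (slice_diff2_nonneg d); assumption.
  - apply (lim0p_le _ _ _ _ LD LD2); exists delta; split; [exact Hdelta|].
    intros s Hs; destruct (Hbox s Hs) as [[Hx Hx1] [[Hy Hy1] Hw]].
    rewrite !diff2_scale by lra; apply div_le_compat_r; [lra|].
    apply (slice_diff2_le_margin d); assumption.
Qed.

Lemma right_pderiv0_lim (Rt : (nat -> option R) -> R) (P : R -> nat -> option R) x l :
  P x 0%nat = Some x -> (forall a, updx (P x) 0 a = P a) ->
  has_right_pderiv Rt 0 (P x) l -> lim0p (fun h => (Rt (P (x + h)) - Rt (P x)) / h) l.
Proof.
  unfold has_right_pderiv; intros Hx Hupd; rewrite Hx; apply lim0p_ext.
  intros h _; rewrite Hupd; reflexivity.
Qed.

Lemma updx_pt x y z a : updx (pt x y z) 0 a = pt a y z.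
Proof. extensionality i; unfold updx; destruct i as [|[|i]]; reflexivity. Qed.

Lemma updx_pt2 x y a : updx (pt2 x y) 0 a = pt2 a y.
Proof. extensionality i; unfold updx; destruct i as [|[|i]]; reflexivity. Qed.

Theorem lemmaA7 (d : nat) (Rt : (nat -> option R) -> R)
  (hd : (2 <= d)%nat)
  (hR : is_tail_copula d Rt)
  (hderiv : forall (x : nat -> option R) (i : nat),
      nonneg_ext d x -> not_all_inf d x -> (i < d)%nat -> x i <> None ->
      exists l, has_right_pderiv Rt i x l)
  (g x y : R) (z : nat -> R)
  (hg : 0 < g) (hx : 0 <= x) (hy : 0 <= y)
  (hz : forall i, (2 <= i < d)%nat -> 0 <= z i)
  (l1 l2 l3 l4 : R)
  (h1 : has_right_pderiv Rt 0 (pt x y z) l1)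
  (h2 : has_right_pderiv Rt 0 (pt x (y + g) z) l2)
  (h3 : has_right_pderiv Rt 0 (pt2 x y) l3)
  (h4 : has_right_pderiv Rt 0 (pt2 x (y + g)) l4) :
  0 <= l2 - l1 <= l4 - l3.
Proof.
  set (Fd p q := Rt (pt p q z)); set (F2 p q := Rt (pt2 p q)).
  pose proof (right_pderiv0_lim Rt (fun a => pt a y z) x l1 eq_refl (updx_pt x y z) h1) as D1.
  pose proof (right_pderiv0_lim Rt (fun a => pt a (y + g) z) x l2 eq_refl (updx_pt x (y + g) z) h2) as D2.
  pose proof (right_pderiv0_lim Rt (fun a => pt2 a y) x l3 eq_refl (updx_pt2 x y) h3) as D3.
  pose proof (right_pderiv0_lim Rt (fun a => pt2 a (y + g)) x l4 eq_refl (updx_pt2 x (y + g)) h4) as D4.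
  pose proof (lim0p_diff2_quotient Fd x y (y + g) l1 l2 D1 D2) as Qd.
  pose proof (lim0p_diff2_quotient F2 x y (y + g) l3 l4 D3 D4) as Q2.
  assert (Hrect : forall h, 0 < h ->
    0 <= diff2 Fd x (x + h) y (y + g) <= diff2 F2 x (x + h) y (y + g))
    by (intros h Hh; apply (tail_copula_diff2 d); auto; lra).
  split.
  - apply (lim0p_le _ _ _ _ (lim0p_const 0) Qd); exists 1; split; [lra|].
    intros h Hh; rewrite <- (Rdiv_0_l h); apply div_le_compat_r; [lra|].
    apply Hrect; lra.
  - apply (lim0p_le _ _ _ _ Qd Q2); exists 1; split; [lra|].
    intros h Hh; apply div_le_compat_r; [lra|]; apply Hrect; lra.
Qed.
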